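(* Let $s\in\mathbb{R}$, $\epsilon\in(0,2\sqrt{2/(e\pi)}]$ and $\Delta\in(0,2]$. There exists a polynomial $p$ of degree at most $$n=\left\lceil\sqrt{8\left\lceil\frac{4}{\Delta^2}\ln(8/\pi\epsilon^2)e^2\right\rceil\ln\!\left(\frac{64\frac{\sqrt2}{\Delta}\ln^{1/2}(8/\pi\epsilon^2)}{3\sqrt\pi\,\epsilon}\right)}+1\right\rceil$$ such that $\max_{x\in[-1,\,s-\Delta/2]\cup[s+\Delta/2,\,1]}|p(x)-\mathrm{sign}(x-s)|\le\epsilon$.
   Context: $\mathrm{sign}(y)=1$ for $y>0$, $0$ for $y=0$, $-1$ for $y<0$. *)

From Stdlib Require Import Reals Lra List.
Open Scope R_scope.

Definition sign (y : R) : R :=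
  if Rlt_dec y 0 then -1 else if Rgt_dec y 0 then 1 else 0.

(* ceiling: Int_part is the floor, so ceil x = - floor(-x) *)
Definition Zceil (x : R) : Z := (- Int_part (- x))%Z.

(* polynomial given by its coefficient list c_0, c_1, ..., c_d *)
Fixpoint peval (c : list R) (x : R) : R :=
  match c with
  | nil => 0
  | a :: c' => a + x * peval c' x
  end.

Definition L (eps : R) : R := ln (8 / (PI * eps ^ 2)).

Definition deg_bound (eps Delta : R) : nat :=
  Z.to_nat (Zceil (sqrt (8 * IZR (Zceil (4 / Delta ^ 2 * L eps * (exp 1) ^ 2))
      * ln (64 * (sqrt 2 / Delta) * sqrt (L eps) / (3 * sqrt PI * eps))) + 1)).

(* The approximant is x |-> F((x - s)/2) / F(1), where F is the antiderivative vanishing at 0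
   of an even polynomial kernel K = B_{d0,g} B_{d1,h}, a product of two normalised Chebyshev
   bumps B_{d,c}(z) = T_d(u_c(z)) / T_d(u_c(0)) with u_c(z) = (1 + c^2 - 2 z^2) / (1 - c^2).
   For c <= |z| <= 1 the argument u_c(z) lies in [-1, 1], so |B_{d,c}(z)| <= 1 / T_d(u_c(0))
   <= 2 e^(-2 c d); for small z, B_{d,c}(z) >= 1 - (4/3) d z^2 / c.  Hence F is odd, the central
   mass gives F(1) >= F(w) >= w - alpha w^3 / 3 with alpha = (4/3)(d0/g + d1/h), and for
   g <= z <= 1 the difference F(1) - F(z) is bounded by the tail mass, which the first bump
   damps on [g, h] and both bumps damp on [h, 1].  With g = Delta/4, h = g ln(8/Delta),
   d1 ~ 2/Delta and d0 as large as the degree bound allows, the tail is below eps times the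
   central mass; checking this is a numerical inequality between explicit bounds on e, pi and
   a few logarithms. *)

From Pilot Require Import Defs.
From Stdlib Require Import Reals Lra Lia List.
Open Scope R_scope.

(** * Polynomial functions *)

Definition is_poly (f : R -> R) (n : nat) : Prop :=
  exists c : list R, (length c <= S n)%nat /\ forall x, peval c x = f x.

Lemma is_poly_ext f g n : (forall x, f x = g x) -> is_poly f n -> is_poly g n.
Proof. intros E [c [Hc Hf]]. exists c; split; [exact Hc|]. intro x; rewrite Hf; apply E. Qed.

Lemma is_poly_le f m n : (m <= n)%nat -> is_poly f m -> is_poly f n.
Proof. intros Hmn [c [Hc Hf]]. exists c; split; [lia|exact Hf]. Qed.

Lemma is_poly_const a n : is_poly (fun _ => a) n.
Proof. exists (a :: nil); split; [simpl; lia|intro x; simpl; ring]. Qed.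

Lemma is_poly_id : is_poly (fun x => x) 1.
Proof. exists (0 :: 1 :: nil); split; [simpl; lia|intro x; simpl; ring]. Qed.

Lemma is_poly_O_inv f : is_poly f 0 -> exists a, forall x, f x = a.
Proof.
  intros [[|a [|b c]] [Hc Hf]]; simpl in Hc.
  - exists 0; intro x; rewrite <- Hf; reflexivity.
  - exists a; intro x; rewrite <- Hf; simpl; ring.
  - lia.
Qed.

Lemma is_poly_S_inv f n :
  is_poly f (S n) -> exists a f1, is_poly f1 n /\ forall x, f x = a + x * f1 x.
Proof.
  intros [[|a c] [Hc Hf]].
  - exists 0, (fun _ => 0); split; [apply is_poly_const|].
    intro x; rewrite <- Hf; simpl; ring.
  - exists a, (peval c); split.
    + exists c; split; [simpl in Hc; lia|reflexivity].
    + intro x; rewrite <- Hf; reflexivity.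
Qed.

Lemma is_poly_plus f g n : is_poly f n -> is_poly g n -> is_poly (fun x => f x + g x) n.
Proof.
  revert f g; induction n as [|n IH]; intros f g Hf Hg.
  - destruct (is_poly_O_inv f Hf) as [a Ha], (is_poly_O_inv g Hg) as [b Hb].
    apply (is_poly_ext (fun _ => a + b)); [intro x; rewrite Ha, Hb; reflexivity|].
    apply is_poly_const.
  - destruct (is_poly_S_inv f n Hf) as [a [f1 [Hf1 Ef]]].
    destruct (is_poly_S_inv g n Hg) as [b [g1 [Hg1 Eg]]].
    destruct (IH f1 g1 Hf1 Hg1) as [c [Hc Hfg]].
    exists ((a + b) :: c); split; [simpl; lia|].
    intro x; simpl; rewrite Hfg, Ef, Eg; ring.
Qed.

Lemma is_poly_scal k f n : is_poly f n -> is_poly (fun x => k * f x) n.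
Proof.
  intros [c [Hc Hf]]. exists (map (Rmult k) c); split; [rewrite length_map; exact Hc|].
  intro x; rewrite <- Hf; clear; induction c as [|a c IH]; simpl; [ring|rewrite IH; ring].
Qed.

Lemma is_poly_mulX f n : is_poly f n -> is_poly (fun x => x * f x) (S n).
Proof. intros [c [Hc Hf]]. exists (0 :: c); split; [simpl; lia|intro x; simpl; rewrite Hf; ring]. Qed.

Lemma is_poly_mult f g n m : is_poly f n -> is_poly g m -> is_poly (fun x => f x * g x) (n + m).
Proof.
  revert f; induction n as [|n IH]; intros f Hf Hg.
  - destruct (is_poly_O_inv f Hf) as [a Ha].
    apply (is_poly_ext (fun x => a * g x)); [intro x; rewrite Ha; reflexivity|].
    now apply is_poly_scal.
  - destruct (is_poly_S_inv f n Hf) as [a [f1 [Hf1 Ef]]].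
    apply (is_poly_ext (fun x => a * g x + x * (f1 x * g x))); [intro x; rewrite Ef; ring|].
    apply is_poly_plus.
    + apply (is_poly_le _ m); [lia|now apply is_poly_scal].
    + now apply is_poly_mulX, IH.
Qed.

Lemma is_poly_comp f g n m : is_poly f n -> is_poly g m -> is_poly (fun x => f (g x)) (n * m).
Proof.
  revert f; induction n as [|n IH]; intros f Hf Hg.
  - destruct (is_poly_O_inv f Hf) as [a Ha].
    apply (is_poly_ext (fun _ => a)); [intro x; rewrite Ha; reflexivity|apply is_poly_const].
  - destruct (is_poly_S_inv f n Hf) as [a [f1 [Hf1 Ef]]].
    apply (is_poly_ext (fun x => a + g x * f1 (g x))); [intro x; rewrite Ef; reflexivity|].
    apply is_poly_plus; [apply is_poly_const|].
    now apply is_poly_mult, IH.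
Qed.

Fixpoint antideriv_coefs (k : nat) (c : list R) : list R :=
  match c with
  | nil => nil
  | a :: c' => a / INR (S k) :: antideriv_coefs (S k) c'
  end.

Lemma antideriv_coefs_length c : forall k, length (antideriv_coefs k c) = length c.
Proof. induction c as [|a c IH]; intro k; simpl; [reflexivity|now rewrite IH]. Qed.

Lemma derivable_pt_lim_antideriv_coefs c : forall k x,
  derivable_pt_lim (fun y => y ^ S k * peval (antideriv_coefs k c) y) x (x ^ k * peval c x).
Proof.
  induction c as [|a c IH]; intros k x; simpl antideriv_coefs; simpl peval.
  - apply (derivable_pt_lim_ext (fun _ => 0)); [intro y; ring|].
    rewrite Rmult_0_r. apply derivable_pt_lim_const.
  - apply (derivable_pt_lim_ext
      (fun y => a / INR (S k) * y ^ S k + y ^ S (S k) * peval (antideriv_coefs (S k) c) y));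
      [intro y; simpl; ring|].
    replace (x ^ k * (a + x * peval c x))
      with (a / INR (S k) * (INR (S k) * x ^ pred (S k)) + x ^ S k * peval c x)
      by (simpl pred; simpl pow; field; apply not_0_INR; lia).
    apply (derivable_pt_lim_plus (fun y => a / INR (S k) * y ^ S k)); [|apply IH].
    apply (derivable_pt_lim_scal (fun y => y ^ S k)), derivable_pt_lim_pow.
Qed.

Lemma is_poly_antiderivative f n : is_poly f n ->
  exists F, is_poly F (S n) /\ F 0 = 0 /\ forall x, derivable_pt_lim F x (f x).
Proof.
  intros [c [Hc Hf]]. exists (peval (0 :: antideriv_coefs 0 c)). split; [|split].
  - exists (0 :: antideriv_coefs 0 c); split; [|reflexivity].
    simpl; rewrite antideriv_coefs_length; lia.
  - simpl; ring.
  - intro x. rewrite <- Hf.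
    apply (derivable_pt_lim_ext (fun y => y ^ 1 * peval (antideriv_coefs 0 c) y));
      [intro y; simpl; ring|].
    replace (peval c x) with (x ^ 0 * peval c x) by (simpl; ring).
    apply derivable_pt_lim_antideriv_coefs.
Qed.

Lemma Rdiv_le_of_le_mul a b c : 0 < b -> a <= c * b -> a / b <= c.
Proof.
  intros Hb H. apply (Rmult_le_reg_r b); [exact Hb|]. unfold Rdiv. rewrite Rmult_assoc, Rinv_l; lra.
Qed.

Lemma Rle_div_of_mul_le a b c : 0 < b -> c * b <= a -> c <= a / b.
Proof.
  intros Hb H. apply (Rmult_le_reg_r b); [exact Hb|]. unfold Rdiv. rewrite Rmult_assoc, Rinv_l; lra.
Qed.

Lemma Rabs_le_between x M : Rabs x <= M -> - M <= x <= M.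
Proof. intro H. pose proof (Rle_abs x). pose proof (Rle_abs (- x)). rewrite Rabs_Ropp in *. lra. Qed.

Lemma le_sqrt_of_sq_le u v : 0 <= u -> u * u <= v -> u <= sqrt v.
Proof. intros Hu H. rewrite <- (sqrt_square u) by exact Hu. apply sqrt_le_1_alt, H. Qed.

Lemma derive_nonneg_le F f a b :
  a <= b -> (forall y, a <= y <= b -> derivable_pt_lim F y (f y)) ->
  (forall y, a <= y <= b -> 0 <= f y) -> F a <= F b.
Proof.
  intros Hab HF Hf. destruct (Req_dec a b) as [<-|Hne]; [lra|].
  destruct (MVT_cor2 F f a b) as [c [Ec Hc]]; [lra|exact HF|].
  assert (0 <= f c * (b - a)) by (apply Rmult_le_pos; [apply Hf|]; lra).
  lra.
Qed.

Lemma derive_le_compat F G f g a b :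
  a <= b -> (forall y, a <= y <= b -> derivable_pt_lim F y (f y)) ->
  (forall y, a <= y <= b -> derivable_pt_lim G y (g y)) ->
  (forall y, a <= y <= b -> g y <= f y) -> G b - G a <= F b - F a.
Proof.
  intros Hab HF HG Hfg.
  enough (F a - G a <= F b - G b) by lra.
  apply (derive_nonneg_le (fun y => F y - G y) (fun y => f y - g y)); [exact Hab| |].
  - intros y Hy. apply (derivable_pt_lim_minus F G); auto.
  - intros y Hy. specialize (Hfg y Hy). lra.
Qed.

Lemma derive_abs_le F f a b M :
  a <= b -> (forall y, a <= y <= b -> derivable_pt_lim F y (f y)) ->
  (forall y, a <= y <= b -> Rabs (f y) <= M) -> Rabs (F b - F a) <= M * (b - a).
Proof.
  intros Hab HF Hf.
  assert (Hlin : forall c y, derivable_pt_lim (fun x => c * x) y c).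
  { intros c y. pose proof (derivable_pt_lim_scal (fun x => x) c y 1 (derivable_pt_lim_id y)) as H.
    rewrite Rmult_1_r in H. exact H. }
  apply Rabs_le; split.
  - enough ((- M) * b - (- M) * a <= F b - F a) by lra.
    apply (derive_le_compat F _ f (fun _ => - M)); auto.
    intros y Hy. exact (proj1 (Rabs_le_between _ _ (Hf y Hy))).
  - enough (F b - F a <= M * b - M * a) by lra.
    apply (derive_le_compat _ F (fun _ => M) f); auto.
    intros y Hy. exact (proj2 (Rabs_le_between _ _ (Hf y Hy))).
Qed.

Lemma derive_0_eq F a b :
  a <= b -> (forall y, a <= y <= b -> derivable_pt_lim F y 0) -> F a = F b.
Proof.
  intros Hab HF. apply Rle_antisym.
  - apply (derive_nonneg_le F (fun _ => 0)); auto; intros; lra.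
  - enough (- F a <= - F b) by lra.
    apply (derive_nonneg_le (fun y => - F y) (fun _ => 0)); [exact Hab| |intros; lra].
    intros y Hy. rewrite <- Ropp_0. apply (derivable_pt_lim_opp F), HF, Hy.
Qed.

Lemma antiderivative_odd F f :
  F 0 = 0 -> (forall x, derivable_pt_lim F x (f x)) -> (forall x, f (- x) = f x) ->
  forall z, F (- z) = - F z.
Proof.
  intros HF0 HF Hf z.
  assert (HD : forall y, derivable_pt_lim (fun x => F x + F (- x)) y 0).
  { intro y. replace 0 with (f y + - f (- y)) by (rewrite Hf; ring).
    apply (derivable_pt_lim_plus F (fun x => F (- x))); [apply HF|].
    apply (derivable_pt_lim_mirr_fwd F). rewrite Ropp_involutive. apply HF. }
  enough (F z + F (- z) = F 0 + F (- 0)) by (rewrite Ropp_0, HF0 in H; lra).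
  destruct (Rle_dec 0 z).
  - symmetry; apply (derive_0_eq (fun x => F x + F (- x))); auto.
  - apply (derive_0_eq (fun x => F x + F (- x))); [lra|auto].
Qed.

(** * Bounds on exp and ln *)

Lemma exp_le_exp x y : x <= y -> exp x <= exp y.
Proof. intros [H|<-]; [left; apply exp_increasing, H|right; reflexivity]. Qed.

Lemma derivable_pt_lim_exp_opp x : derivable_pt_lim (fun y => exp (- y)) x (- exp (- x)).
Proof. apply (derivable_pt_lim_mirr_fwd exp). rewrite Ropp_involutive. apply derivable_pt_lim_exp. Qed.

(* [exp_term x n = x^n / n!], computed as a product of the ratios [x / k] so that [simpl]
   evaluates [exp_taylor] at explicit points without expanding [INR (fact n)]. *)
Fixpoint exp_term (x : R) (n : nat) : R :=
  match n with O => 1 | S k => exp_term x k * x / INR (S k) end.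

Fixpoint exp_taylor (x : R) (n : nat) : R :=
  match n with O => 1 | S k => exp_taylor x k + exp_term x (S k) end.

Lemma derivable_pt_lim_exp_term n x :
  derivable_pt_lim (fun y => exp_term y (S n)) x (exp_term x n).
Proof.
  induction n as [|n IH].
  - apply (derivable_pt_lim_ext (fun y => 1 * y)); [intro y; simpl; field|].
    replace (exp_term x 0) with (1 * 1) by (simpl; ring).
    apply (derivable_pt_lim_scal (fun y => y)), derivable_pt_lim_id.
  - apply (derivable_pt_lim_ext (fun y => / INR (S (S n)) * (exp_term y (S n) * y))).
    { intro y. change (exp_term y (S (S n))) with (exp_term y (S n) * y / INR (S (S n))).
      unfold Rdiv; ring. }
    replace (exp_term x (S n)) with
      (/ INR (S (S n)) * (exp_term x n * x + exp_term x (S n) * 1)).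
    + apply (derivable_pt_lim_scal (fun y => exp_term y (S n) * y)).
      apply (derivable_pt_lim_mult (fun y => exp_term y (S n)) (fun y => y)); [exact IH|].
      apply derivable_pt_lim_id.
    + change (exp_term x (S n)) with (exp_term x n * x / INR (S n)).
      rewrite !S_INR. pose proof (pos_INR n). field; lra.
Qed.

Lemma derivable_pt_lim_exp_taylor n x :
  derivable_pt_lim (fun y => exp_taylor y (S n)) x (exp_taylor x n).
Proof.
  induction n as [|n IH].
  - replace (exp_taylor x 0) with (0 + exp_term x 0) by (simpl; ring).
    apply (derivable_pt_lim_plus (fun _ => 1) (fun y => exp_term y 1)).
    + apply derivable_pt_lim_const.
    + apply derivable_pt_lim_exp_term.
  - apply (derivable_pt_lim_plus (fun y => exp_taylor y (S n)) (fun y => exp_term y (S (S n)))).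
    + exact IH.
    + apply derivable_pt_lim_exp_term.
Qed.

Lemma exp_taylor_0 n : exp_taylor 0 n = 1.
Proof.
  induction n as [|n IH]; [reflexivity|].
  simpl exp_taylor. rewrite IH. unfold Rdiv. rewrite Rmult_0_r, !Rmult_0_l. ring.
Qed.

Lemma exp_taylor_le n x : 0 <= x -> exp_taylor x n <= exp x.
Proof.
  revert x; induction n as [|n IH]; intros x Hx.
  - pose proof (exp_ineq1_le x). simpl; lra.
  - enough (exp_taylor x (S n) - exp_taylor 0 (S n) <= exp x - exp 0)
      by (rewrite exp_taylor_0, exp_0 in *; lra).
    apply (derive_le_compat exp (fun y => exp_taylor y (S n)) exp (fun y => exp_taylor y n));
      [exact Hx| | |].
    + intros y _. apply derivable_pt_lim_exp.
    + intros y _. apply derivable_pt_lim_exp_taylor.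
    + intros y Hy. apply IH; lra.
Qed.

Definition rho (g : R) : R := (1 + g) / (1 - g).

Lemma rho_ge_1 g : 0 <= g < 1 -> 1 <= rho g.
Proof. intro Hg. apply Rle_div_of_mul_le; lra. Qed.

(* Compare (1 + y) e^-y with (1 - y) e^y, which agree at 0. *)
Lemma exp_le_rho g : 0 <= g < 1 -> exp (2 * g) <= rho g.
Proof.
  intros Hg.
  assert (Hcmp : (1 - g) * exp g - (1 - 0) * exp 0 <= (1 + g) * exp (- g) - (1 + 0) * exp (- 0)).
  { apply (derive_le_compat (fun y => (1 + y) * exp (- y)) (fun y => (1 - y) * exp y)
             (fun y => - (y * exp (- y))) (fun y => - (y * exp y))); [lra| | |].
    - intros y _. replace (- (y * exp (- y))) with (1 * exp (- y) + (1 + y) * - exp (- y)) by ring.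
      apply (derivable_pt_lim_mult (fun y => 1 + y) (fun y => exp (- y))).
      + replace 1 with (0 + 1) at 1 by ring.
        apply (derivable_pt_lim_plus (fun _ => 1) (fun y => y));
          [apply derivable_pt_lim_const|apply derivable_pt_lim_id].
      + apply derivable_pt_lim_exp_opp.
    - intros y _. replace (- (y * exp y)) with ((-1) * exp y + (1 - y) * exp y) by ring.
      apply (derivable_pt_lim_mult (fun y => 1 - y) exp); [|apply derivable_pt_lim_exp].
      replace (-1) with (0 - 1) by ring.
      apply (derivable_pt_lim_minus (fun _ => 1) (fun y => y));
        [apply derivable_pt_lim_const|apply derivable_pt_lim_id].
    - intros y Hy. assert (exp (- y) <= exp y) by (apply exp_le_exp; lra).
      apply Ropp_le_contravar, Rmult_le_compat_l; lra. }
  rewrite Ropp_0, exp_0 in Hcmp.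
  assert (Eg : exp g * exp (- g) = 1) by (rewrite <- exp_plus, Rplus_opp_r; apply exp_0).
  pose proof (exp_pos g).
  unfold rho. replace (2 * g) with (g + g) by ring. rewrite exp_plus.
  apply Rmult_le_reg_r with ((1 - g) * exp (- g)); [apply Rmult_lt_0_compat; [lra|apply exp_pos]|].
  replace (exp g * exp g * ((1 - g) * exp (- g))) with ((1 - g) * exp g * (exp g * exp (- g))) by ring.
  rewrite Eg, Rmult_1_r.
  replace ((1 + g) / (1 - g) * ((1 - g) * exp (- g))) with ((1 + g) * exp (- g)) by (field; lra).
  lra.
Qed.

Lemma exp_mult_INR n x : exp (INR n * x) = exp x ^ n.
Proof.
  induction n as [|n IH]; [simpl; rewrite Rmult_0_l; apply exp_0|].
  rewrite S_INR, Rmult_plus_distr_r, Rmult_1_l, exp_plus, IH. simpl; ring.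
Qed.

Lemma exp_le_rho_pow n g : 0 <= g < 1 -> exp (2 * g * INR n) <= rho g ^ n.
Proof.
  intro Hg. replace (2 * g * INR n) with (INR n * (2 * g)) by ring.
  rewrite exp_mult_INR. apply pow_incr. split; [left; apply exp_pos|apply exp_le_rho, Hg].
Qed.

Lemma ln_le_of_le_exp y a : 0 < y -> y <= exp a -> ln y <= a.
Proof.
  intros Hy H. rewrite <- (ln_exp a).
  destruct H as [H|H]; [left; apply ln_increasing; auto|rewrite H; right; reflexivity].
Qed.

Lemma le_ln_of_exp_le a y : exp a <= y -> a <= ln y.
Proof.
  intro H. rewrite <- (ln_exp a).
  destruct H as [H|H]; [left; apply ln_increasing; auto; apply exp_pos|rewrite <- H; right; reflexivity].
Qed.

Lemma le_of_ln_le a b : 0 < a -> 0 < b -> ln a <= ln b -> a <= b.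
Proof. intros Ha Hb H. rewrite <- (exp_ln a), <- (exp_ln b) by assumption. apply exp_le_exp, H. Qed.

Lemma ln_le x y : 0 < x -> x <= y -> ln x <= ln y.
Proof. intros Hx H. apply ln_le_of_le_exp; [lra|]. rewrite exp_ln by lra. exact H. Qed.

Lemma ln_le_sub_1 x : 0 < x -> ln x <= x - 1.
Proof. intro Hx. apply ln_le_of_le_exp; [exact Hx|]. pose proof (exp_ineq1_le (x - 1)). lra. Qed.

Lemma ln_sqrt x : 0 < x -> ln (sqrt x) = ln x / 2.
Proof.
  intro Hx. pose proof (sqrt_lt_R0 x Hx).
  rewrite <- (sqrt_sqrt x) at 2 by lra. rewrite ln_mult by assumption. field.
Qed.

Lemma exp_1_ge : 2718 / 1000 <= exp 1.
Proof. eapply Rle_trans; [|apply (exp_taylor_le 10); lra]. simpl; lra. Qed.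

Lemma ln_2_le : ln 2 <= 6932 / 10000.
Proof.
  apply ln_le_of_le_exp; [lra|]. eapply Rle_trans; [|apply (exp_taylor_le 12); lra]. simpl; lra.
Qed.

Lemma ln_3_le : ln 3 <= 10987 / 10000.
Proof.
  apply ln_le_of_le_exp; [lra|]. eapply Rle_trans; [|apply (exp_taylor_le 12); lra]. simpl; lra.
Qed.

Lemma ln_22_10_le : ln (22 / 10) <= 789 / 1000.
Proof.
  apply ln_le_of_le_exp; [lra|]. eapply Rle_trans; [|apply (exp_taylor_le 12); lra]. simpl; lra.
Qed.

Lemma ln_4_ge : 1385 / 1000 <= ln 4.
Proof.
  apply le_ln_of_exp_le. replace (1385 / 1000) with (2 * (1385 / 32000) * INR 16) by (simpl; lra).
  eapply Rle_trans; [apply exp_le_rho_pow; lra|]. unfold rho. simpl; lra.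
Qed.

Lemma PI_bounds : 3135 / 1000 <= PI <= 31421 / 10000.
Proof.
  destruct (PI_2_3_7_ineq 0) as [H0 _]. destruct (PI_2_3_7_ineq 1) as [_ H1].
  unfold tg_alt, PI_2_3_7_tg, Ratan_seq in H0, H1. simpl in H0, H1. lra.
Qed.

Lemma ln_8_div_PI_ge : 934 / 1000 <= ln (8 / PI).
Proof.
  pose proof PI_bounds. apply le_ln_of_exp_le.
  replace (934 / 1000) with (2 * (934 / 32000) * INR 16) by (simpl; lra).
  eapply Rle_trans; [apply exp_le_rho_pow; lra|]. unfold rho.
  apply Rle_div_of_mul_le; [lra|]. simpl; nra.
Qed.

(** * Chebyshev polynomials *)

Fixpoint cheb (n : nat) (x : R) : R :=
  match n with
  | O => 1
  | S O => x
  | S (S k as m) => 2 * x * cheb m x - cheb k x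
  end.

Lemma nat_ind2 (P : nat -> Prop) :
  P O -> P 1%nat -> (forall k, P k -> P (S k) -> P (S (S k))) -> forall n, P n.
Proof.
  intros H0 H1 HS n. enough (P n /\ P (S n)) by tauto.
  induction n as [|n [IHn IHSn]]; [tauto|split; auto].
Qed.

Lemma cheb_eq_rec (a : nat -> R) x :
  a O = 1 -> a 1%nat = x -> (forall k, a (S (S k)) = 2 * x * a (S k) - a k) ->
  forall n, cheb n x = a n.
Proof.
  intros H0 H1 HS. apply nat_ind2; [auto|auto|].
  intros k IHk IHSk. rewrite HS, <- IHk, <- IHSk. reflexivity.
Qed.

Lemma is_poly_cheb n : is_poly (cheb n) n.
Proof.
  revert n; apply nat_ind2; [apply is_poly_const|apply is_poly_id|].
  intros k Hk HSk.
  apply (is_poly_ext (fun x => 2 * (x * cheb (S k) x) + (-1) * cheb k x));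
    [intro x; simpl; ring|].
  apply is_poly_plus; [now apply is_poly_scal, is_poly_mulX|].
  apply is_poly_scal, (is_poly_le _ k); [lia|exact Hk].
Qed.

Lemma cheb_cos n t : cheb n (cos t) = cos (INR n * t).
Proof.
  apply (cheb_eq_rec (fun k => cos (INR k * t))).
  - rewrite Rmult_0_l; apply cos_0.
  - simpl; rewrite Rmult_1_l; reflexivity.
  - intro k. rewrite !S_INR.
    replace ((INR k + 1 + 1) * t) with ((INR k + 1) * t + t) by ring.
    replace (INR k * t) with ((INR k + 1) * t - t) by ring.
    rewrite cos_plus, cos_minus. ring.
Qed.

Lemma Rabs_cheb_le_1 n x : -1 <= x <= 1 -> Rabs (cheb n x) <= 1.
Proof. intro Hx. rewrite <- (cos_acos x Hx), cheb_cos. apply Rabs_le, COS_bound. Qed.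

Lemma cheb_hyp n r : 0 < r -> cheb n ((r + / r) / 2) = (r ^ n + / r ^ n) / 2.
Proof.
  intro Hr. apply (cheb_eq_rec (fun k => (r ^ k + / r ^ k) / 2)).
  - simpl; field.
  - simpl; field; lra.
  - intro k. pose proof (pow_lt r k Hr). simpl; field; lra.
Qed.

(** * Chebyshev bumps *)

(* The substitution sends z^2 = g^2 to 1 and z^2 = 1 to -1; at z = 0 it is
   (rho g + / rho g) / 2. *)
Definition bump_arg (g z : R) : R := (1 + g * g - 2 * (z * z)) / (1 - g * g).

Definition bump (d : nat) (g z : R) : R := cheb d (bump_arg g z).

Definition nbump (d : nat) (g z : R) : R := bump d g z / bump d g 0.

Lemma is_poly_nbump d g : is_poly (nbump d g) (2 * d).
Proof.
  apply (is_poly_ext (fun z => / bump d g 0 * bump d g z)); [intro z; unfold nbump, Rdiv; ring|].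
  apply is_poly_scal. replace (2 * d)%nat with (d * 2)%nat by lia.
  apply (is_poly_comp (cheb d) (bump_arg g)); [apply is_poly_cheb|].
  apply (is_poly_ext (fun z => (1 + g * g) / (1 - g * g) + (-2 / (1 - g * g)) * (z * z)));
    [intro z; unfold bump_arg, Rdiv; ring|].
  apply is_poly_plus; [apply is_poly_const|].
  apply is_poly_scal, (is_poly_mult _ _ 1 1); apply is_poly_id.
Qed.

Lemma bump_even d g z : bump d g (- z) = bump d g z.
Proof. unfold bump, bump_arg. do 3 f_equal. ring. Qed.

Lemma Rabs_bump_le_1 d g z : 0 < g < 1 -> g * g <= z * z <= 1 -> Rabs (bump d g z) <= 1.
Proof.
  intros Hg Hz. apply Rabs_cheb_le_1. unfold bump_arg.
  assert (0 < 1 - g * g) by nra.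
  split; [apply Rle_div_of_mul_le|apply Rdiv_le_of_le_mul]; lra.
Qed.

Lemma bump_0 d g : 0 <= g < 1 -> bump d g 0 = (rho g ^ d + / rho g ^ d) / 2.
Proof.
  intro Hg. pose proof (rho_ge_1 g Hg). unfold bump. rewrite <- cheb_hyp by lra.
  f_equal. unfold bump_arg, rho. field. split; nra.
Qed.

Lemma bump_0_ge d g : 0 <= g < 1 -> exp (2 * g * INR d) / 2 <= bump d g 0.
Proof.
  intro Hg. rewrite bump_0 by exact Hg.
  pose proof (exp_le_rho_pow d g Hg). pose proof (rho_ge_1 g Hg).
  assert (1 <= rho g ^ d) by (apply pow_R1_Rle; lra).
  assert (0 < / rho g ^ d) by (apply Rinv_0_lt_compat; lra). lra.
Qed.

Lemma bump_0_pos d g : 0 <= g < 1 -> 0 < bump d g 0.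
Proof. intro Hg. pose proof (bump_0_ge d g Hg). pose proof (exp_pos (2 * g * INR d)). lra. Qed.

Lemma Rabs_nbump_tail d g z : 0 < g < 1 -> g * g <= z * z <= 1 -> Rabs (nbump d g z) <= / bump d g 0.
Proof.
  intros Hg Hz. pose proof (bump_0_pos d g ltac:(lra)).
  unfold nbump, Rdiv. rewrite Rabs_mult, (Rabs_pos_eq (/ _)) by (left; apply Rinv_0_lt_compat; lra).
  rewrite <- (Rmult_1_l (/ bump d g 0)) at 2.
  apply Rmult_le_compat_r; [left; apply Rinv_0_lt_compat; lra|apply Rabs_bump_le_1; auto].
Qed.

Lemma xinv_le A B : 1 <= A <= B -> A + / A <= B + / B.
Proof.
  intro H.
  assert (E : B + / B - (A + / A) = (B - A) * (A * B - 1) / (A * B)) by (field; lra).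
  assert (0 <= (B - A) * (A * B - 1) / (A * B))
    by (apply Rle_div_of_mul_le; [nra|rewrite Rmult_0_l; apply Rmult_le_pos; nra]).
  lra.
Qed.

Lemma ratio_le_xinv_ratio A B : 0 < A <= B -> A / B <= (A + / A) / (B + / B).
Proof.
  intro H.
  assert (E : (A + / A) / (B + / B) - A / B = (B * B - A * A) / (A * B * (B * B + 1)))
    by (field; repeat split; nra).
  assert (0 <= (B * B - A * A) / (A * B * (B * B + 1)))
    by (apply Rle_div_of_mul_le; [apply Rmult_lt_0_compat; nra|nra]).
  lra.
Qed.

Lemma bernoulli_ineq t n : 0 <= t <= 1 -> 1 - INR n * t <= (1 - t) ^ n.
Proof.
  intro Ht. induction n as [|n IH]; [simpl; lra|].
  rewrite S_INR. simpl.
  assert (0 <= (1 - t) * ((1 - t) ^ n - (1 - INR n * t))) by (apply Rmult_le_pos; lra).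
  assert (0 <= INR n * (t * t)) by (apply Rmult_le_pos; [apply pos_INR|nra]).
  nra.
Qed.

Lemma sqrt_sub_sq_ge c z :
  0 < c -> z * z <= 3 / 4 * (c * c) -> c - 2 / 3 * (z * z) / c <= sqrt (c * c - z * z).
Proof.
  intros Hc Hz.
  set (e := 2 / 3 * (z * z) / c).
  assert (He : e * c = 2 / 3 * (z * z)) by (unfold e; field; lra).
  assert (0 <= e <= c / 2) by (split; [unfold e; apply Rle_div_of_mul_le|]; nra).
  rewrite <- (sqrt_square (c - e)) by lra. apply sqrt_le_1_alt. nra.
Qed.

Section BumpCenter.
Variables (g z : R).
Hypothesis Hg : 0 < g < 1.
Hypothesis Hz : z * z <= g * g.

(* For |z| <= g, [bump_arg g z = (r + / r) / 2] with [r = rho (a / b)] and [a / b <= g]. *)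
Let a := sqrt (g * g - z * z).
Let b := sqrt (1 - z * z).
Let r := (b + a) / (b - a).

Lemma bump_center_facts :
  a * a = g * g - z * z /\ b * b = 1 - z * z /\ 0 <= a <= g * b /\ a < b.
Proof.
  assert (Ha : a * a = g * g - z * z) by (apply sqrt_sqrt; lra).
  assert (Hb : b * b = 1 - z * z) by (apply sqrt_sqrt; nra).
  assert (0 <= a) by apply sqrt_pos. assert (0 <= b) by apply sqrt_pos.
  assert (a <= g * b).
  { apply Rsqr_incr_0_var; [unfold Rsqr|nra].
    replace (g * b * (g * b)) with (g * g * (b * b)) by ring. rewrite Ha, Hb.
    assert (0 <= z * z * (1 - g * g)) by (apply Rmult_le_pos; nra). nra. }
  repeat split; auto; nra.
Qed.

Lemma bump_center_range : 1 <= r <= rho g.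
Proof.
  destruct bump_center_facts as [Ha [Hb [Hab Hba]]].
  unfold r, rho. split.
  - apply Rle_div_of_mul_le; lra.
  - apply Rdiv_le_of_le_mul; [lra|].
    replace ((1 + g) / (1 - g) * (b - a)) with ((1 + g) * (b - a) / (1 - g)) by (field; lra).
    apply Rle_div_of_mul_le; nra.
Qed.

Lemma bump_center_eq d : bump d g z = (r ^ d + / r ^ d) / 2.
Proof.
  destruct bump_center_facts as [Ha [Hb [Hab Hba]]].
  pose proof bump_center_range.
  unfold bump. rewrite <- cheb_hyp by lra. f_equal.
  replace (bump_arg g z) with ((a * a + b * b) / ((b - a) * (b + a))) by (unfold bump_arg; f_equal; nra).
  unfold r. field. repeat split; nra.
Qed.

Lemma nbump_center d : 0 <= nbump d g z <= 1.
Proof.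
  pose proof bump_center_range. pose proof (bump_0_pos d g ltac:(lra)).
  assert (0 <= bump d g z <= bump d g 0).
  { rewrite bump_center_eq, bump_0 by lra.
    assert (1 <= r ^ d) by (apply pow_R1_Rle; lra).
    assert (r ^ d <= rho g ^ d) by (apply pow_incr; lra).
    pose proof (xinv_le (r ^ d) (rho g ^ d) ltac:(lra)).
    pose proof (Rinv_0_lt_compat (r ^ d) ltac:(lra)). lra. }
  unfold nbump. split; [apply Rle_div_of_mul_le|apply Rdiv_le_of_le_mul]; lra.
Qed.

Lemma nbump_center_ge d : z * z <= 3 / 4 * (g * g) -> 1 - 4 / 3 * INR d * (z * z) / g <= nbump d g z.
Proof.
  intro Hz34.
  destruct bump_center_facts as [Ha [Hb [Hab Hba]]]. pose proof bump_center_range.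
  set (e := 2 / 3 * (z * z) / g).
  assert (He : 0 <= e <= 1 / 2)
    by (unfold e; split; [apply Rle_div_of_mul_le|apply Rdiv_le_of_le_mul]; nra).
  assert (Hq : 1 - e <= (a + b) / (1 + g)).
  { pose proof (sqrt_sub_sq_ge g z ltac:(lra) Hz34) as Ha'.
    pose proof (sqrt_sub_sq_ge 1 z ltac:(lra) ltac:(nra)) as Hb'.
    rewrite Rmult_1_l, Rdiv_1_r in Hb'. fold a in Ha'. fold b in Hb'.
    apply Rle_div_of_mul_le; [lra|]. unfold e in *.
    replace (2 / 3 * (z * z) / g * (1 + g)) with (2 / 3 * (z * z) / g + 2 / 3 * (z * z)) by (field; lra).
    nra. }
  assert (Hrq : r / rho g = ((a + b) / (1 + g)) ^ 2).
  { assert (Eba : b - a = (1 - g * g) / (b + a)).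
    { apply (Rmult_eq_reg_r (b + a)); [|lra]. field_simplify; [nra|lra]. }
    unfold r, rho. rewrite Eba. field. repeat split; nra. }
  unfold nbump. rewrite bump_center_eq, bump_0 by lra.
  assert (1 <= r ^ d) by (apply pow_R1_Rle; lra).
  assert (r ^ d <= rho g ^ d) by (apply pow_incr; lra).
  pose proof (Rinv_0_lt_compat (r ^ d) ltac:(lra)).
  replace ((r ^ d + / r ^ d) / 2 / ((rho g ^ d + / rho g ^ d) / 2))
    with ((r ^ d + / r ^ d) / (rho g ^ d + / rho g ^ d)) by (field; repeat split; nra).
  eapply Rle_trans; [|apply ratio_le_xinv_ratio; lra].
  replace (r ^ d / rho g ^ d) with (((a + b) / (1 + g)) ^ (2 * d))
    by (rewrite pow_mult, <- Hrq; unfold Rdiv; rewrite Rpow_mult_distr, pow_inv; reflexivity).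
  eapply Rle_trans; [|apply pow_incr; split; [|exact Hq]; lra].
  eapply Rle_trans; [|apply bernoulli_ineq; lra].
  rewrite mult_INR. unfold e. simpl INR. right; field; lra.
Qed.

End BumpCenter.

(** * The kernel and its antiderivative *)

Definition kernel (d0 d1 : nat) (g h z : R) : R := nbump d0 g z * nbump d1 h z.

Definition kernel_alpha (d0 d1 : nat) (g h : R) : R := 4 / 3 * (INR d0 / g + INR d1 / h).

Definition kernel_tail (d0 d1 : nat) (g h : R) : R :=
  (h - g) / bump d0 g 0 + (1 - h) / (bump d0 g 0 * bump d1 h 0).

Lemma is_poly_kernel d0 d1 g h : is_poly (kernel d0 d1 g h) (2 * d0 + 2 * d1).
Proof. apply (is_poly_mult (nbump d0 g) (nbump d1 h)); apply is_poly_nbump. Qed.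

Lemma kernel_even d0 d1 g h z : kernel d0 d1 g h (- z) = kernel d0 d1 g h z.
Proof. unfold kernel, nbump. rewrite !bump_even. reflexivity. Qed.

Section Kernel.
Variables (d0 d1 : nat) (g h : R).
Hypothesis Hgh : 0 < g < h /\ h < 1.

Let P0 := bump d0 g 0.
Let P1 := bump d1 h 0.

Lemma kernel_center_nonneg z : z * z <= g * g -> 0 <= kernel d0 d1 g h z.
Proof.
  intro Hz. pose proof (nbump_center g z ltac:(lra) Hz d0).
  pose proof (nbump_center h z ltac:(lra) ltac:(nra) d1).
  apply Rmult_le_pos; lra.
Qed.

Lemma kernel_center_ge z :
  z * z <= 3 / 4 * (g * g) -> 1 - kernel_alpha d0 d1 g h * (z * z) <= kernel d0 d1 g h z.
Proof.
  intro Hz. pose proof (nbump_center_ge g z ltac:(lra) ltac:(nra) d0 Hz).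
  pose proof (nbump_center_ge h z ltac:(lra) ltac:(nra) d1 ltac:(nra)).
  pose proof (nbump_center g z ltac:(lra) ltac:(nra) d0).
  pose proof (nbump_center h z ltac:(lra) ltac:(nra) d1).
  unfold kernel, kernel_alpha.
  assert (0 <= (1 - nbump d0 g z) * (1 - nbump d1 h z)) by (apply Rmult_le_pos; lra).
  replace (4 / 3 * (INR d0 / g + INR d1 / h) * (z * z))
    with (4 / 3 * INR d0 * (z * z) / g + 4 / 3 * INR d1 * (z * z) / h) by (field; lra).
  nra.
Qed.

Lemma Rabs_kernel_mid z : g * g <= z * z <= h * h -> Rabs (kernel d0 d1 g h z) <= / P0.
Proof.
  intro Hz. pose proof (Rabs_nbump_tail d0 g z ltac:(lra) ltac:(nra)).
  pose proof (nbump_center h z ltac:(lra) ltac:(nra) d1).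
  unfold kernel. rewrite Rabs_mult, (Rabs_pos_eq (nbump d1 h z)) by lra.
  rewrite <- (Rmult_1_r (/ P0)). apply Rmult_le_compat; auto using Rabs_pos; lra.
Qed.

Lemma Rabs_kernel_far z : h * h <= z * z <= 1 -> Rabs (kernel d0 d1 g h z) <= / P0 * / P1.
Proof.
  intro Hz. unfold kernel. rewrite Rabs_mult.
  apply Rmult_le_compat; auto using Rabs_pos; apply Rabs_nbump_tail; nra.
Qed.

Variable F : R -> R.
Hypothesis HF0 : F 0 = 0.
Hypothesis HF : forall x, derivable_pt_lim F x (kernel d0 d1 g h x).

Lemma antiderivative_kernel_mass w :
  0 <= w -> w * w <= 3 / 4 * (g * g) -> w - kernel_alpha d0 d1 g h / 3 * w ^ 3 <= F w.
Proof.
  intros Hw Hwg. set (al := kernel_alpha d0 d1 g h).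
  enough (w - al / 3 * w ^ 3 - (0 - al / 3 * 0 ^ 3) <= F w - F 0) by (rewrite HF0 in H; simpl in H; lra).
  apply (derive_le_compat F (fun y => y - al / 3 * y ^ 3) (kernel d0 d1 g h)
           (fun y => 1 - al / 3 * (INR 3 * y ^ 2))); [exact Hw|intros; apply HF| |].
  - intros y _. apply (derivable_pt_lim_minus (fun y => y) (fun y => al / 3 * y ^ 3));
      [apply derivable_pt_lim_id|apply (derivable_pt_lim_scal (fun y => y ^ 3)), derivable_pt_lim_pow].
  - intros y Hy. replace (1 - al / 3 * (INR 3 * y ^ 2)) with (1 - al * (y * y)) by (simpl; field).
    apply kernel_center_ge. nra.
Qed.

Lemma antiderivative_kernel_tail y : g <= y <= 1 -> Rabs (F 1 - F y) <= kernel_tail d0 d1 g h.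
Proof.
  intro Hy. pose proof (bump_0_pos d0 g ltac:(lra)). pose proof (bump_0_pos d1 h ltac:(lra)).
  assert (Hmid : forall a b, g <= a <= b -> b <= h -> Rabs (F b - F a) <= / P0 * (b - a)).
  { intros a b Ha Hb. apply (derive_abs_le F (kernel d0 d1 g h)); [lra|intros; apply HF|].
    intros x Hx. apply Rabs_kernel_mid. split; nra. }
  assert (Hfar : forall a b, h <= a <= b -> b <= 1 -> Rabs (F b - F a) <= / P0 * / P1 * (b - a)).
  { intros a b Ha Hb. apply (derive_abs_le F (kernel d0 d1 g h)); [lra|intros; apply HF|].
    intros x Hx. apply Rabs_kernel_far. split; nra. }
  assert (0 < / P0) by (apply Rinv_0_lt_compat; assumption).
  assert (0 < / P0 * / P1) by (apply Rmult_lt_0_compat; apply Rinv_0_lt_compat; assumption).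
  unfold kernel_tail. fold P0 P1. unfold Rdiv. rewrite Rinv_mult.
  destruct (Rle_dec y h) as [Hyh|Hyh].
  - replace (F 1 - F y) with ((F 1 - F h) + (F h - F y)) by ring.
    eapply Rle_trans; [apply Rabs_triang|].
    pose proof (Hmid y h ltac:(lra) ltac:(lra)). pose proof (Hfar h 1 ltac:(lra) ltac:(lra)). nra.
  - pose proof (Hfar y 1 ltac:(lra) ltac:(lra)). nra.
Qed.

End Kernel.

Definition sign_approx (p : R -> R) (g eps : R) : Prop :=
  forall z, g <= Rabs z <= 1 -> Rabs (p z - sign z) <= eps.

Lemma sign_pos y : 0 < y -> sign y = 1.
Proof.
  intro Hy. unfold sign. destruct (Rlt_dec y 0); [lra|]. destruct (Rgt_dec y 0); [reflexivity|lra].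
Qed.

Lemma sign_neg y : y < 0 -> sign y = -1.
Proof. intro Hy. unfold sign. destruct (Rlt_dec y 0); [reflexivity|lra]. Qed.

Lemma Rabs_div_sub_1_le a b T M eps :
  0 < eps -> 0 < M -> T * (1 + eps) <= eps * M -> M - T <= b -> Rabs (b - a) <= T ->
  Rabs (a / b - 1) <= eps.
Proof.
  intros He HM HTM Hb Hab. pose proof (Rabs_pos (b - a)).
  assert (Hb0 : 0 < b) by nra.
  replace (a / b - 1) with (- (b - a) / b) by (field; lra).
  unfold Rdiv. rewrite Rabs_mult, Rabs_Ropp, (Rabs_pos_eq (/ b)) by (left; apply Rinv_0_lt_compat, Hb0).
  apply Rdiv_le_of_le_mul; [exact Hb0|]. nra.
Qed.

Lemma sign_approx_of_odd p g eps :
  0 < g -> (forall z, p (- z) = - p z) -> (forall y, g <= y <= 1 -> Rabs (p y - 1) <= eps) ->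
  sign_approx p g eps.
Proof.
  intros Hg Hodd Hp z Hz. destruct (Rle_dec 0 z) as [Hz0|Hz0].
  - rewrite Rabs_pos_eq in Hz by exact Hz0. rewrite sign_pos by lra. apply Hp, Hz.
  - rewrite Rabs_left in Hz by lra. rewrite sign_neg by lra.
    replace z with (- - z) by ring. rewrite Hodd.
    replace (- p (- z) - -1) with (- (p (- z) - 1)) by ring.
    rewrite Rabs_Ropp. apply Hp, Hz.
Qed.

Lemma kernel_sign_approx d0 d1 g h eps :
  0 < g < h -> h < 1 -> 0 < eps -> 4 / 3 <= kernel_alpha d0 d1 g h * (g * g) ->
  kernel_tail d0 d1 g h * (1 + eps) * sqrt (kernel_alpha d0 d1 g h) <= 2 / 3 * eps ->
  exists p, is_poly p (S (2 * d0 + 2 * d1)) /\ sign_approx p g eps.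
Proof.
  intros Hg Hh He Hal HT.
  set (al := kernel_alpha d0 d1 g h) in *. set (T := kernel_tail d0 d1 g h) in *.
  destruct (is_poly_antiderivative _ _ (is_poly_kernel d0 d1 g h)) as [F [HFp [HF0 HF]]].
  assert (Hal0 : 0 < al) by nra.
  assert (Hsal : 0 < sqrt al) by (apply sqrt_lt_R0, Hal0).
  (* [w = / sqrt al] maximises the central mass bound [w - al w^3 / 3]. *)
  set (w := / sqrt al).
  assert (Hw0 : 0 < w) by (apply Rinv_0_lt_compat, Hsal).
  assert (Hww : al * (w * w) = 1) by (unfold w; rewrite <- Rinv_mult, sqrt_sqrt by lra; field; lra).
  assert (Hwg : w * w <= 3 / 4 * (g * g)).
  { apply (Rmult_le_reg_l al); [exact Hal0|]. rewrite Hww. nra. }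
  set (M := 2 / 3 * w).
  assert (HM : M <= F w).
  { assert (EM : al / 3 * w ^ 3 = al * (w * w) * w / 3) by field.
    replace M with (w - al / 3 * w ^ 3) by (unfold M; rewrite EM, Hww; field).
    apply (antiderivative_kernel_mass d0 d1 g h ltac:(lra) F HF0 HF); lra. }
  assert (HFwg : F w <= F g).
  { apply (derive_nonneg_le F (kernel d0 d1 g h)); [nra|intros; apply HF|].
    intros y Hy. apply kernel_center_nonneg; [lra|nra]. }
  assert (HFg1 := antiderivative_kernel_tail d0 d1 g h ltac:(lra) F HF g ltac:(lra)).
  fold T in HFg1. pose proof (Rle_abs (- (F 1 - F g))) as HFg1'. rewrite Rabs_Ropp in HFg1'.
  assert (HTM : T * (1 + eps) <= eps * M).
  { apply (Rmult_le_reg_r (sqrt al)); [exact Hsal|].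
    replace (eps * M * sqrt al) with (2 / 3 * eps) by (unfold M, w; field; lra). exact HT. }
  assert (Hclose : forall y, g <= y <= 1 -> Rabs (F y / F 1 - 1) <= eps).
  { intros y Hy. apply (Rabs_div_sub_1_le _ _ T M); [exact He|unfold M; lra|exact HTM|lra|].
    apply (antiderivative_kernel_tail d0 d1 g h ltac:(lra) F HF y Hy). }
  exists (fun z => F z / F 1). split.
  - apply (is_poly_ext (fun z => / F 1 * F z)); [intro z; unfold Rdiv; ring|].
    apply is_poly_scal, HFp.
  - apply sign_approx_of_odd; [lra| |exact Hclose].
    intro z. rewrite (antiderivative_odd F (kernel d0 d1 g h) HF0 HF (kernel_even d0 d1 g h)).
    unfold Rdiv; ring.
Qed.

Lemma sign_approx_shift p n g eps s :
  is_poly p n -> sign_approx p g eps -> -1 <= s <= 1 ->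
  exists c : list R, (length c <= S n)%nat /\
    forall x, -1 <= x <= 1 -> 2 * g <= Rabs (x - s) -> Rabs (peval c x - sign (x - s)) <= eps.
Proof.
  intros Hp Happrox Hs.
  assert (Hq : is_poly (fun x => p ((x - s) / 2)) (n * 1)).
  { apply (is_poly_comp p (fun x => (x - s) / 2)); [exact Hp|].
    apply (is_poly_ext (fun x => - s / 2 + / 2 * x)); [intro x; field|].
    apply is_poly_plus; [apply is_poly_const|apply is_poly_scal, is_poly_id]. }
  rewrite Nat.mul_1_r in Hq. destruct Hq as [c [Hc Hcp]].
  exists c. split; [exact Hc|]. intros x Hx Hxs.
  rewrite Hcp.
  replace (sign (x - s)) with (sign ((x - s) / 2)).
  - apply Happrox. unfold Rdiv. rewrite Rabs_mult, (Rabs_pos_eq (/ 2)) by lra.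
    split; [lra|]. apply Rdiv_le_of_le_mul; [lra|]. apply Rabs_le; lra.
  - destruct (Rtotal_order (x - s) 0) as [Hneg|[Hzero|Hpos]].
    + rewrite !sign_neg by lra. reflexivity.
    + rewrite Hzero. f_equal. field.
    + rewrite !sign_pos by lra. reflexivity.
Qed.

(** * Choice of the parameters *)

(* What remains of [log_budget] once X is replaced by its lower bound;
   33859/10000 is 191/100 * (2 - 10/44). *)
Lemma poly_budget L s : 1 <= L -> 11768 / 10000 <= s ->
  17661 / 10000 + 2 * s + L / 2 <= 33859 / 10000 * sqrt (L * (1 / 4 + s * s + L / 2)).
Proof.
  intros HL Hs.
  set (A := 17661 / 10000 + 2 * s + L / 2).
  enough (A / (33859 / 10000) <= sqrt (L * (1 / 4 + s * s + L / 2))) as H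
    by (apply (Rmult_le_compat_l (33859 / 10000)) in H; [|lra];
        replace (33859 / 10000 * (A / (33859 / 10000))) with A in H by field; exact H).
  apply le_sqrt_of_sq_le; [apply Rle_div_of_mul_le; unfold A; lra|]. unfold A.
  set (p := L - 1). set (q := s - 11768 / 10000).
  assert (0 <= p) by (unfold p; lra). assert (0 <= q) by (unfold q; lra).
  replace L with (1 + p) by (unfold p; ring). replace s with (11768 / 10000 + q) by (unfold q; ring).
  assert (0 <= p * q) by nra. assert (0 <= p * p) by nra. assert (0 <= q * q) by nra.
  assert (0 <= p * q * q) by nra. assert (0 <= p * p * p) by nra. assert (0 <= p * p * q) by nra.
  nra.
Qed.

(* Taking logarithms, with ln t <= 2 (sqrt t - 1), ln (1 + eps) <= ln 2, ln (4/3) <= 1/3 and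
   ln y <= ln (22/10) + y / (22/10) - 1, reduces the claim to [poly_budget]. *)
Lemma log_budget eps L t X k :
  0 < eps <= 1 -> ln eps = ln (8 / PI) / 2 - L / 2 -> 1 <= L ->
  1385 / 1000 <= t -> 0 < k <= / t ->
  191 / 100 * sqrt (L * (1 / 4 + t + L / 2)) - 5 / 4 <= X ->
  3 * t * (1 + eps) * sqrt (4 / 3 * (X + k)) <= eps * exp (2 * X).
Proof.
  intros He Hle HL Ht Hk HX.
  set (s := sqrt t).
  assert (Hss : s * s = t) by (apply sqrt_sqrt; lra).
  assert (Hs : 11768 / 10000 <= s) by (apply le_sqrt_of_sq_le; lra).
  pose proof (poly_budget L s HL Hs) as HP. rewrite Hss in HP.
  set (Q := sqrt (L * (1 / 4 + t + L / 2))) in *.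
  assert (HQ : 146 / 100 <= Q) by (apply le_sqrt_of_sq_le; nra).
  assert (Hit : / t <= 1000 / 1385)
    by (rewrite <- (Rinv_inv (1000 / 1385)); apply Rinv_le_contravar; lra).
  assert (Hsq : 0 < sqrt (4 / 3 * (X + k))) by (apply sqrt_lt_R0; lra).
  apply le_of_ln_le; [apply Rmult_lt_0_compat; [|exact Hsq]; apply Rmult_lt_0_compat; lra|
                      apply Rmult_lt_0_compat; [lra|apply exp_pos]|].
  rewrite !ln_mult by (try apply Rmult_lt_0_compat; try apply exp_pos; lra).
  rewrite ln_exp, ln_sqrt, ln_mult by lra.
  assert (B1 : ln t <= 2 * (s - 1)).
  { rewrite <- Hss, ln_mult by lra. pose proof (ln_le_sub_1 s ltac:(lra)). lra. }
  assert (B2 : ln (1 + eps) <= 6932 / 10000)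
    by (apply Rle_trans with (ln 2); [apply ln_le; lra|apply ln_2_le]).
  assert (B3 : ln (4 / 3) <= 1 / 3) by (pose proof (ln_le_sub_1 (4 / 3) ltac:(lra)); lra).
  assert (B4 : ln (X + k) <= 789 / 1000 + (X + k) / (22 / 10) - 1).
  { replace (X + k) with (22 / 10 * ((X + k) / (22 / 10))) at 1 by field.
    rewrite ln_mult by lra. pose proof ln_22_10_le.
    pose proof (ln_le_sub_1 ((X + k) / (22 / 10)) ltac:(lra)). lra. }
  pose proof ln_3_le. pose proof ln_8_div_PI_ge.
  rewrite Hle. lra.
Qed.

(* [Defs.Zceil], used in [deg_bound], is shadowed by the [Zceil] of Stdlib's Reals. *)
Lemma Zceil_ge y : y <= IZR (Defs.Zceil y).
Proof. unfold Defs.Zceil, Int_part. rewrite opp_IZR, minus_IZR. destruct (archimed (- y)). lra. Qed.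

Lemma INR_Zceil_ge y : 0 <= y -> y <= INR (Z.to_nat (Defs.Zceil y)).
Proof.
  intro Hy. pose proof (Zceil_ge y).
  rewrite INR_IZR_INZ, Znat.Z2Nat.id by (apply le_IZR; lra). assumption.
Qed.

Lemma kernel_tail_le d0 d1 g h :
  0 < g < h -> h < 1 -> / g <= bump d1 h 0 -> kernel_tail d0 d1 g h <= h / bump d0 g 0.
Proof.
  intros Hg Hh HP1. pose proof (bump_0_pos d0 g ltac:(lra)) as HP0.
  assert (Hi1 : / bump d1 h 0 <= g)
    by (rewrite <- (Rinv_inv g); apply Rinv_le_contravar; [apply Rinv_0_lt_compat|]; lra).
  pose proof (Rinv_0_lt_compat _ HP0).
  unfold kernel_tail, Rdiv. rewrite Rinv_mult.
  pose proof (Rinv_0_lt_compat _ (bump_0_pos d1 h ltac:(lra))).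
  assert ((1 - h) * / bump d1 h 0 <= g) by nra.
  nra.
Qed.

Lemma inv_le_bump_0 d g t :
  0 < g -> 0 < t -> t * g < 1 -> exp t = 2 / g -> 1 / 2 < g * INR d -> / g <= bump d (t * g) 0.
Proof.
  intros Hg Ht Htg Het Hd.
  eapply Rle_trans; [|apply bump_0_ge; split; [nra|lra]].
  assert (exp t <= exp (2 * (t * g) * INR d)) by (apply exp_le_exp; nra).
  rewrite Het in *. apply Rle_div_of_mul_le; [lra|]. unfold Rdiv in *. lra.
Qed.

(* With [h = t g] and [exp t = 2 / g], the second bump damps the far tail by [g], so the
   tail is at most [h / bump d0 g 0 <= 2 h exp (-2 X)], [X = g d0]. *)
Lemma kernel_params_sufficient d0 d1 g t eps :
  0 < g -> 1 < t -> t * g < 1 -> exp t = 2 / g -> 0 < eps ->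
  1 / 2 < g * INR d1 <= 1 / 2 + g -> 1 <= g * INR d0 ->
  3 * t * (1 + eps) * sqrt (4 / 3 * (g * INR d0 + (1 / 2 + g) / t)) <= eps * exp (2 * (g * INR d0)) ->
  4 / 3 <= kernel_alpha d0 d1 g (t * g) * (g * g) /\
  kernel_tail d0 d1 g (t * g) * (1 + eps) * sqrt (kernel_alpha d0 d1 g (t * g)) <= 2 / 3 * eps.
Proof.
  intros Hg Ht Htg Het He Hd1 HX1 Hbudget.
  set (X := g * INR d0) in *. set (h := t * g) in *. set (k := (1 / 2 + g) / t) in *.
  assert (Hgh : g < h) by (unfold h; nra).
  assert (Hal : kernel_alpha d0 d1 g h * (g * g) = 4 / 3 * (X + g * INR d1 / t))
    by (unfold kernel_alpha, X, h; field; lra).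
  assert (Hd1t : 0 <= g * INR d1 / t <= k)
    by (unfold k; split; [apply Rle_div_of_mul_le|apply Rdiv_le_of_le_mul]; try lra;
        unfold Rdiv; rewrite Rmult_assoc, Rinv_l; lra).
  split; [rewrite Hal; lra|].
  pose proof (bump_0_pos d0 g ltac:(nra)) as HP0.
  pose proof (bump_0_pos d1 h ltac:(lra)) as HP1.
  assert (HP0X : exp (2 * X) / 2 <= bump d0 g 0)
    by (replace (2 * X) with (2 * g * INR d0) by (unfold X; ring); apply bump_0_ge; nra).
  pose proof (inv_le_bump_0 d1 g t Hg ltac:(lra) Htg Het ltac:(lra)) as HP1g.
  pose proof (kernel_tail_le d0 d1 g h ltac:(lra) Htg HP1g) as HT.
  assert (HT0 : 0 <= kernel_tail d0 d1 g h).
  { unfold kernel_tail. apply Rplus_le_le_0_compat; apply Rle_div_of_mul_le;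
      try apply Rmult_lt_0_compat; lra. }
  set (S := sqrt (4 / 3 * (X + k))).
  assert (Hsal : sqrt (kernel_alpha d0 d1 g h) <= S / g).
  { unfold S. rewrite <- (sqrt_square g) at 2 by lra. rewrite <- sqrt_div_alt by nra.
    apply sqrt_le_1_alt, Rle_div_of_mul_le; [nra|]. rewrite Hal. lra. }
  apply Rle_trans with (h / bump d0 g 0 * (1 + eps) * (S / g)).
  { apply Rmult_le_compat; [nra|apply sqrt_pos|apply Rmult_le_compat_r; lra|exact Hsal]. }
  replace (h / bump d0 g 0 * (1 + eps) * (S / g)) with (t * (1 + eps) * S / bump d0 g 0)
    by (unfold h; field; lra).
  apply Rdiv_le_of_le_mul; [exact HP0|]. unfold S in *. nra.
Qed.

Section Choice.
Variables eps Delta : R.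
Hypothesis Heps : 0 < eps <= 2 * sqrt (2 / (exp 1 * PI)).
Hypothesis HDelta : 0 < Delta <= 2.

Lemma eps_sq_le : exp 1 * PI * (eps * eps) <= 8.
Proof.
  pose proof exp_1_ge. pose proof PI_bounds.
  assert (Hc : 0 < 2 / (exp 1 * PI)) by (apply Rdiv_lt_0_compat; nra).
  pose proof (sqrt_sqrt _ (Rlt_le _ _ Hc)). pose proof (sqrt_pos (2 / (exp 1 * PI))).
  assert (Hsq : eps * eps <= 4 * (2 / (exp 1 * PI))) by nra.
  apply (Rmult_le_compat_l (exp 1 * PI)) in Hsq; [|nra].
  replace (exp 1 * PI * (4 * (2 / (exp 1 * PI)))) with 8 in Hsq by (field; nra). exact Hsq.
Qed.

Lemma eps_le_1 : eps <= 1.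
Proof.
  pose proof exp_1_ge. pose proof PI_bounds. pose proof eps_sq_le.
  assert (852 / 100 <= exp 1 * PI) by nra.
  assert (852 / 100 * (eps * eps) <= 8) by nra.
  nra.
Qed.

Lemma L_ge_1 : 1 <= L eps.
Proof.
  pose proof exp_1_ge. pose proof PI_bounds. pose proof eps_sq_le.
  unfold L. apply le_ln_of_exp_le.
  apply Rle_div_of_mul_le; [apply Rmult_lt_0_compat; [lra|apply pow_lt; lra]|].
  replace (exp 1 * (PI * eps ^ 2)) with (exp 1 * PI * (eps * eps)) by ring. assumption.
Qed.

Lemma ln_eps_eq : ln eps = ln (8 / PI) / 2 - L eps / 2.
Proof.
  pose proof PI_bounds. unfold L.
  replace (8 / (PI * eps ^ 2)) with (8 / PI * / eps ^ 2) by (field; lra).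
  rewrite ln_mult, ln_Rinv, ln_pow by (try apply Rinv_0_lt_compat; try apply Rdiv_lt_0_compat;
                                       try apply pow_lt; lra).
  simpl INR. lra.
Qed.

Lemma ln_8_div_Delta_ge : 1385 / 1000 <= ln (8 / Delta).
Proof. eapply Rle_trans; [apply ln_4_ge|]. apply ln_le; [lra|]. apply Rle_div_of_mul_le; lra. Qed.

Lemma ln_8_div_Delta_mul_lt_1 : ln (8 / Delta) * (Delta / 4) < 1.
Proof.
  replace (8 / Delta) with (2 * (4 / Delta)) by (field; lra).
  assert (0 < 4 / Delta) by (apply Rdiv_lt_0_compat; lra).
  rewrite ln_mult by lra. pose proof ln_2_le.
  pose proof (ln_le_sub_1 (4 / Delta) ltac:(lra)) as Hl.
  apply (Rmult_le_compat_r (Delta / 4)) in Hl; [|lra].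
  replace ((4 / Delta - 1) * (Delta / 4)) with (1 - Delta / 4) in Hl by (field; lra).
  nra.
Qed.

Lemma ln_deg_bound_arg_ge : 1 / 4 + ln (8 / Delta) + L eps / 2 <=
  ln (64 * (sqrt 2 / Delta) * sqrt (L eps) / (3 * sqrt PI * eps)).
Proof.
  pose proof PI_bounds. pose proof L_ge_1.
  set (E := exp (L eps / 2)).
  assert (HE : 0 < E) by apply exp_pos.
  assert (HEE : E * E = 8 / (PI * eps ^ 2)).
  { unfold E. rewrite <- exp_plus. replace (L eps / 2 + L eps / 2) with (L eps) by field.
    apply exp_ln, Rdiv_lt_0_compat; [lra|apply Rmult_lt_0_compat; [lra|apply pow_lt; lra]]. }
  assert (H2 : 0 < sqrt 2) by (apply sqrt_lt_R0; lra).
  assert (Hpi : 0 < sqrt PI) by (apply sqrt_lt_R0; lra).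
  assert (HpiE : sqrt PI * eps * E = 2 * sqrt 2).
  { apply Rsqr_inj; [apply Rmult_le_pos; [apply Rmult_le_pos|]; lra|lra|]. unfold Rsqr.
    replace (sqrt PI * eps * E * (sqrt PI * eps * E))
      with (sqrt PI * sqrt PI * (eps * eps) * (E * E)) by ring.
    replace (2 * sqrt 2 * (2 * sqrt 2)) with (4 * (sqrt 2 * sqrt 2)) by ring.
    rewrite HEE, !sqrt_sqrt by lra. field; lra. }
  replace (64 * (sqrt 2 / Delta) * sqrt (L eps) / (3 * sqrt PI * eps))
    with (4 / 3 * (8 / Delta) * sqrt (L eps) * E)
    by (replace (sqrt 2) with (sqrt PI * eps * E / 2) by lra; field; repeat split; lra).
  assert (HsL : 1 <= sqrt (L eps)) by (apply le_sqrt_of_sq_le; lra).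
  assert (0 < 8 / Delta) by (apply Rdiv_lt_0_compat; lra).
  rewrite (ln_mult (4 / 3 * (8 / Delta) * sqrt (L eps))), (ln_mult (4 / 3 * (8 / Delta))),
    (ln_mult (4 / 3))
    by (repeat apply Rmult_lt_0_compat; lra).
  unfold E. rewrite ln_exp.
  assert (1 / 4 <= ln (4 / 3)).
  { replace (4 / 3) with (/ (3 / 4)) by field. rewrite ln_Rinv by lra.
    pose proof (ln_le_sub_1 (3 / 4) ltac:(lra)). lra. }
  assert (0 <= ln (sqrt (L eps))) by (rewrite <- ln_1; apply ln_le; lra).
  lra.
Qed.

Lemma deg_bound_ge : 191 / 100 * sqrt (L eps * (1 / 4 + ln (8 / Delta) + L eps / 2)) + Delta / 8
  <= Delta / 8 * INR (deg_bound eps Delta).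
Proof.
  pose proof exp_1_ge. pose proof L_ge_1. pose proof ln_8_div_Delta_ge. pose proof ln_deg_bound_arg_ge.
  set (lnB := ln (64 * (sqrt 2 / Delta) * sqrt (L eps) / (3 * sqrt PI * eps))) in *.
  set (A := IZR (Defs.Zceil (4 / Delta ^ 2 * L eps * exp 1 ^ 2))).
  assert (HA : 4 / Delta ^ 2 * L eps * exp 1 ^ 2 <= A) by apply Zceil_ge.
  assert (HA0 : 0 <= 4 / Delta ^ 2 * L eps * exp 1 ^ 2)
    by (apply Rmult_le_pos; [apply Rmult_le_pos; [apply Rle_div_of_mul_le|]|]; nra).
  set (Q := sqrt (L eps * (1 / 4 + ln (8 / Delta) + L eps / 2))).
  assert (HQ : 0 <= Q) by apply sqrt_pos.
  assert (HQQ : Q * Q = L eps * (1 / 4 + ln (8 / Delta) + L eps / 2)) by (apply sqrt_sqrt; nra).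
  assert (Hs2 : sqrt 2 * sqrt 2 = 2) by (apply sqrt_sqrt; lra).
  assert (Hs2ge : 1414 / 1000 <= sqrt 2) by (apply le_sqrt_of_sq_le; lra).
  set (U := 4 * sqrt 2 * exp 1 / Delta * Q).
  assert (HUU : U * U = 8 * (4 / Delta ^ 2 * L eps * exp 1 ^ 2) * (1 / 4 + ln (8 / Delta) + L eps / 2)).
  { replace (U * U) with (16 * (sqrt 2 * sqrt 2) * exp 1 ^ 2 / Delta ^ 2 * (Q * Q))
      by (unfold U; field; lra).
    rewrite Hs2, HQQ. field. lra. }
  assert (HU : U <= sqrt (8 * A * lnB)).
  { apply le_sqrt_of_sq_le; [apply Rmult_le_pos; [apply Rle_div_of_mul_le|]; nra|].
    rewrite HUU. apply Rmult_le_compat; lra. }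
  assert (HN : sqrt (8 * A * lnB) + 1 <= INR (deg_bound eps Delta))
    by (apply INR_Zceil_ge; pose proof (sqrt_pos (8 * A * lnB)); lra).
  assert (HQe : 191 / 100 * Q <= Delta / 8 * U).
  { replace (Delta / 8 * U) with (sqrt 2 * exp 1 / 2 * Q) by (unfold U; field; lra).
    apply Rmult_le_compat_r; nra. }
  apply (Rmult_le_compat_l (Delta / 8)) in HN; [|lra].
  nra.
Qed.

Lemma exists_degrees : exists d0 d1,
  (S (2 * d0 + 2 * d1) <= deg_bound eps Delta)%nat /\
  1 / 2 < Delta / 4 * INR d1 <= 1 / 2 + Delta / 4 /\
  191 / 100 * sqrt (L eps * (1 / 4 + ln (8 / Delta) + L eps / 2)) - 5 / 4 <= Delta / 4 * INR d0.
Proof.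
  pose proof deg_bound_ge as HN. pose proof L_ge_1. pose proof ln_8_div_Delta_ge.
  set (N := deg_bound eps Delta) in *.
  set (Q := sqrt (L eps * (1 / 4 + ln (8 / Delta) + L eps / 2))) in *.
  assert (HQ : 146 / 100 <= Q) by (apply le_sqrt_of_sq_le; nra).
  set (d1 := Z.to_nat (up (2 / Delta))).
  assert (Hd1 : 1 / 2 < Delta / 4 * INR d1 <= 1 / 2 + Delta / 4).
  { assert (0 < 2 / Delta) by (apply Rdiv_lt_0_compat; lra).
    destruct (archimed (2 / Delta)).
    assert (2 / Delta < INR d1 <= 2 / Delta + 1)
      by (unfold d1; rewrite INR_IZR_INZ, Znat.Z2Nat.id by (apply le_IZR; lra); lra).
    replace (1 / 2) with (Delta / 4 * (2 / Delta)) by (field; lra).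
    replace (Delta / 4 * (2 / Delta) + Delta / 4) with (Delta / 4 * (2 / Delta + 1)) by ring.
    split; [apply Rmult_lt_compat_l|apply Rmult_le_compat_l]; lra. }
  set (m := Nat.div2 (pred N)).
  assert (HN1 : (1 <= N)%nat) by (apply INR_le; simpl; nra).
  assert (Hm : (2 * m + 1 <= N <= 2 * m + 2)%nat).
  { pose proof (Nat.div2_odd (pred N)). destruct (Nat.odd (pred N)); simpl in *; lia. }
  assert (HmR : INR N <= 2 * INR m + 2)
    by (replace (2 * INR m + 2) with (INR (2 * m + 2)) by (rewrite plus_INR, mult_INR; simpl; ring);
        apply le_INR; lia).
  assert (HX : 191 / 100 * Q - 5 / 4 <= Delta / 4 * (INR m - INR d1)) by nra.
  assert (Hd1m : (d1 <= m)%nat) by (apply INR_le; nra).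
  exists (m - d1)%nat, d1. rewrite minus_INR by exact Hd1m. repeat split; [lia|lra|lra|exact HX].
Qed.

Lemma sign_approx_poly : exists p, is_poly p (deg_bound eps Delta) /\ sign_approx p (Delta / 4) eps.
Proof.
  pose proof L_ge_1. pose proof eps_le_1.
  pose proof ln_8_div_Delta_ge as Ht. pose proof ln_8_div_Delta_mul_lt_1 as Htg.
  destruct exists_degrees as [d0 [d1 [Hdeg [Hd1 HX]]]].
  set (g := Delta / 4) in *. set (t := ln (8 / Delta)) in *.
  assert (Het : exp t = 2 / g)
    by (unfold t, g; rewrite exp_ln by (apply Rdiv_lt_0_compat; lra); field; lra).
  assert (HQ : 146 / 100 <= sqrt (L eps * (1 / 4 + t + L eps / 2))) by (apply le_sqrt_of_sq_le; nra).
  assert (Hk : 0 < (1 / 2 + g) / t <= / t).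
  { split; [apply Rdiv_lt_0_compat; unfold g; lra|].
    apply Rdiv_le_of_le_mul; [lra|]. rewrite Rinv_l; unfold g; lra. }
  destruct (kernel_params_sufficient d0 d1 g t eps) as [Hal HT];
    [unfold g; lra|lra|exact Htg|exact Het|lra|exact Hd1|lra| |].
  { apply (log_budget eps (L eps)); [lra|apply ln_eps_eq|lra|exact Ht|exact Hk|exact HX]. }
  destruct (kernel_sign_approx d0 d1 g (t * g) eps) as [p [Hp Hpa]];
    [unfold g in *; split; nra|exact Htg|lra|exact Hal|exact HT|].
  exists p. split; [exact (is_poly_le _ _ _ Hdeg Hp)|exact Hpa].
Qed.
End Choice.

Theorem corollary2 (s eps Delta : R)
  (Heps : 0 < eps <= 2 * sqrt (2 / (exp 1 * PI)))
  (HDelta : 0 < Delta <= 2) :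
  exists c : list R,
    (length c <= S (deg_bound eps Delta))%nat /\
    forall x : R,
      ((-1 <= x <= s - Delta / 2) \/ (s + Delta / 2 <= x <= 1)) ->
      Rabs (peval c x - sign (x - s)) <= eps.
Proof.
  destruct (Rle_dec 1 s) as [Hs1|Hs1].
  { exists (-1 :: nil). split; [simpl; lia|]. intros x Hx.
    rewrite sign_neg by (destruct Hx; lra). simpl.
    replace (-1 + x * 0 - -1) with 0 by ring. rewrite Rabs_R0. lra. }
  destruct (Rle_dec s (-1)) as [Hs2|Hs2].
  { exists (1 :: nil). split; [simpl; lia|]. intros x Hx.
    rewrite sign_pos by (destruct Hx; lra). simpl.
    replace (1 + x * 0 - 1) with 0 by ring. rewrite Rabs_R0. lra. }
  destruct (sign_approx_poly eps Delta Heps HDelta) as [p [Hp Happrox]].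
  destruct (sign_approx_shift p _ _ _ s Hp Happrox ltac:(lra)) as [c [Hc Hc_approx]].
  exists c. split; [exact Hc|]. intros x Hx.
  apply Hc_approx; [destruct Hx; lra|].
  destruct Hx; [rewrite Rabs_left1|rewrite Rabs_pos_eq]; lra.
Qed.
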